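(* Let $m\ge 3$ and let $K\ne\Delta_{[m]}$ be a simplicial complex on $[m]$. Then $\chi(\mathrm{Bier}(K))=m-1$ if and only if $K$ is, up to relabeling of vertices, obtained from one of the three complexes on $[3]$ $$G_4=\{\varnothing,\{1\},\{2\},\{1,2\}\},\quad \Gamma_4=\{\varnothing,\{1\},\{2\},\{3\},\{1,2\},\{1,3\}\},\quad \Gamma_6=\{\varnothing,\{1\},\{2\},\{3\}\}$$ by a finite sequence of the following two operations: (1) taking a cone: a complex $R$ on $[n]$ is replaced by $\{\sigma,\sigma\cup\{n+1\}:\sigma\in R\}$ on $[n+1]$; (2) taking the Alexander dual: a complex $R\ne\Delta_{[n]}$ on $[n]$ is replaced by $R^\vee$, regarded as a complex on $[n]$ via $i'\mapsto i$.
   Context: A simplicial complex $K$ on $[m]=\{1,\dots,m\}$ is a nonempty family of subsets of $[m]$ closed under taking subsets (elements $i$ with $\{i\}\notin K$ are ghost vertices; e.g. $3$ is a ghost vertex of $G_4$). $V(K)=\{i:\{i\}\in K\}$. $\Delta_{[n]}=2^{[n]}$. Let $[n']=\{1',\dots,n'\}$ be a disjoint copy of $[n]$, $I'=\{i':i\in I\}$. For $K\ne\Delta_{[n]}$ on $[n]$ the Alexander dual $K^\vee$ is the complex on $[n']$ with $J'\in K^\vee$ iff $[n]\setminus J\notin K$. The Bier sphere $\mathrm{Bier}(K)$ is the complex on $[n]\sqcup[n']$ with faces $I\sqcup J'$, $I\in K$, $J'\in K^\vee$, $I\cap J=\varnothing$. The chromatic number $\chi(L)$ is the least number of colors in a map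 $c\colon V(L)\to C$ with $c(u)\ne c(v)$ whenever $\{u,v\}\in L$. *)

From mathcomp Require Import all_boot perm.
Set Implicit Arguments. Unset Strict Implicit. Unset Printing Implicit Defensive.

Definition is_complex (T : finType) (K : {set {set T}}) : Prop :=
  K != set0 /\ (forall A B : {set T}, B \subset A -> A \in K -> B \in K).

(* The full simplex Delta_T is setT : {set {set T}}. *)

Definition alex_dual (T : finType) (K : {set {set T}}) : {set {set T}} :=
  [set J : {set T} | ~: J \notin K].

(* Bier sphere on [n] (inl) disjoint-union [n'] (inr). *)
Definition bier (T : finType) (K : {set {set T}}) : {set {set (T + T)}} :=
  [set S : {set (T + T)} |
     [&& [set i | inl i \in S] \in K,
         [set j | inr j \in S] \in alex_dual K &
         [disjoint [set i | inl i \in S] & [set j | inr j \in S]]]].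

Definition colorable (T : finType) (L : {set {set T}}) (k : nat) : Prop :=
  exists c : T -> nat,
    (forall v, [set v] \in L -> c v < k) /\
    (forall u v, u != v -> [set u; v] \in L -> c u != c v).

Definition chromatic_number_is (T : finType) (L : {set {set T}}) (k : nat) : Prop :=
  colorable L k /\ (forall j, colorable L j -> k <= j).

Definition widen_set (n : nat) (S : {set 'I_n}) : {set 'I_n.+1} :=
  [set widen_ord (leqnSn n) i | i in S].

Definition cone (n : nat) (R : {set {set 'I_n}}) : {set {set 'I_n.+1}} :=
  [set widen_set S | S : {set 'I_n} in R] :|: [set ord_max |: widen_set S | S : {set 'I_n} in R].

(* The three base complexes on [3] = {0,1,2} (vertex i+1 of the paper is i). *)
Definition v1 : 'I_3 := @Ordinal 3 0 isT.
Definition v2 : 'I_3 := @Ordinal 3 1 isT.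
Definition v3 : 'I_3 := @Ordinal 3 2 isT.

Definition G4 : {set {set 'I_3}} := [set set0; [set v1]; [set v2]; [set v1; v2]].
Definition Gamma4 : {set {set 'I_3}} :=
  [set set0; [set v1]; [set v2]; [set v3]; [set v1; v2]; [set v1; v3]].
Definition Gamma6 : {set {set 'I_3}} := [set set0; [set v1]; [set v2]; [set v3]].

Inductive gen_from_base : forall n : nat, {set {set 'I_n}} -> Prop :=
  | gen_G4 : gen_from_base G4
  | gen_Gamma4 : gen_from_base Gamma4
  | gen_Gamma6 : gen_from_base Gamma6
  | gen_cone (n : nat) (R : {set {set 'I_n}}) : gen_from_base R -> gen_from_base (cone R)
  | gen_dual (n : nat) (R : {set {set 'I_n}}) :
      gen_from_base R -> R != setT -> gen_from_base (alex_dual R).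

Definition relabel (n : nat) (s : {perm 'I_n}) (K : {set {set 'I_n}}) : {set {set 'I_n}} :=
  [set (s @: S) | S : {set 'I_n} in K].

From mathcomp Require Import all_boot fingroup perm zify.
Set Implicit Arguments. Unset Strict Implicit. Unset Printing Implicit Defensive.

(* If [I] is a face and [I + x] is not, the left copy of [I] and the right copy
   of the complement of [I + x] span a clique of [m - 1] vertices in the
   1-skeleton of [Bier(K)], so [chi(Bier(K)) >= m - 1].  Taking a cone adds one
   color (the two apex copies are not adjacent), the Alexander dual just swaps
   the two copies of [[m]], and the three base complexes have 2-colorable Bier
   spheres: this gives one direction.
   Conversely, take a coloring with [m - 1] colors.  If some vertex [v] has both
   copies colored alike, the cliques above force [v] to be a cone point, and
   removing it leaves a complex whose Bier sphere is [(m - 2)]-colorable, so we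
   induct down to [m = 3], where cones are classified by hand.  Otherwise every
   maximal face has as many elements as there are colors on left vertices; if
   this number were [>= 2] the left vertices, and if it were [<= m - 3] the
   right vertices, would form a clique of size [m], so [m = 3] and [K = Gamma6]. *)

Section BierEdges.
Variable T : finType.
Implicit Types (K : {set {set T}}) (i j : T) (S : {set T + T}).

Definition lpart S : {set T} := [set i | inl i \in S].
Definition rpart S : {set T} := [set j | inr j \in S].

Lemma bierE K S :
  (S \in bier K) = [&& lpart S \in K, ~: rpart S \notin K & [disjoint lpart S & rpart S]].
Proof. by rewrite !inE. Qed.

Lemma bier_edge_ll K i j :
  ([set inl i; inl j] \in bier K) = ([set i; j] \in K) && (setT \notin K).
Proof.
rewrite bierE.
have -> : lpart [set inl i; inl j] = [set i; j].
  by apply/setP => x; rewrite !inE.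
have -> : rpart [set inl i; inl j] = set0.
  by apply/setP => x; rewrite !inE.
by rewrite setC0 disjoints_subset setC0 subsetT andbT.
Qed.

Lemma bier_edge_rr K i j :
  ([set inr i; inr j] \in bier K) = (~: [set i; j] \notin K) && (set0 \in K).
Proof.
rewrite bierE.
have -> : rpart [set inr i; inr j] = [set i; j].
  by apply/setP => x; rewrite !inE.
have -> : lpart [set inr i; inr j] = set0.
  by apply/setP => x; rewrite !inE.
by rewrite disjoints_subset sub0set andbT andbC.
Qed.

Lemma bier_edge_lr K i j :
  ([set inl i; inr j] \in bier K) = [&& [set i] \in K, ~: [set j] \notin K & i != j].
Proof.
rewrite bierE.
have -> : lpart [set inl i; inr j] = [set i].
  by apply/setP => x; rewrite !inE orbF.
have -> : rpart [set inl i; inr j] = [set j].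
  by apply/setP => x; rewrite !inE.
by rewrite disjoints1 inE eq_sym.
Qed.

Lemma bier_edge_rl K i j :
  ([set inr j; inl i] \in bier K) = [&& [set i] \in K, ~: [set j] \notin K & i != j].
Proof. by rewrite setUC -bier_edge_lr. Qed.

Lemma bier_edge_twins K i : ([set inl i; inr i] \in bier K) = false.
Proof. by rewrite bier_edge_lr eqxx !andbF. Qed.

Lemma bier_vertex_l K i : ([set inl i] \in bier K) = ([set i] \in K) && (setT \notin K).
Proof. by rewrite -[[set inl i]]setUid bier_edge_ll setUid. Qed.

Lemma bier_vertex_r K j : ([set inr j] \in bier K) = (~: [set j] \notin K) && (set0 \in K).
Proof. by rewrite -[[set inr j]]setUid bier_edge_rr setUid. Qed.

End BierEdges.

Lemma colorable_pullback (X Y : finType) (L1 : {set {set X}}) (L2 : {set {set Y}})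
    (phi : Y -> X) k :
  injective phi -> (forall u v, [set u; v] \in L2 -> [set phi u; phi v] \in L1) ->
  colorable L1 k -> colorable L2 k.
Proof.
move=> phi_inj phi_edge [c [c_range c_proper]]; exists (c \o phi); split => [v vL|u v uv uvL].
  by apply: c_range; rewrite -[[set phi v]]setUid phi_edge ?setUid.
by apply: c_proper; rewrite ?(inj_eq phi_inj) ?phi_edge.
Qed.

Definition sum_map (A B : Type) (f : A -> B) (u : A + A) : B + B :=
  match u with inl a => inl (f a) | inr a => inr (f a) end.

Lemma sum_map_inj (A B : Type) (f : A -> B) : injective f -> injective (sum_map f).
Proof. by move=> f_inj [a|a] [b|b] //= [/f_inj ->]. Qed.

Section CliqueColoring.
Variables (X : finType) (L : {set {set X}}) (k : nat) (c : X -> nat).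
Hypothesis c_range : forall v, [set v] \in L -> c v < k.
Hypothesis c_proper : forall u v, u != v -> [set u; v] \in L -> c u != c v.
Variable s : seq X.
Hypothesis s_uniq : uniq s.
Hypothesis s_clique : {in s &, forall u v, [set u; v] \in L}.

Lemma clique_colors_uniq : uniq (map c s).
Proof.
rewrite map_inj_in_uniq // => u v us vs cuv; case: (eqVneq u v) => // uv.
by have := c_proper uv (s_clique us vs); rewrite cuv eqxx.
Qed.

Lemma clique_colors_sub : {subset map c s <= iota 0 k}.
Proof.
move=> _ /mapP [u us ->]; rewrite mem_iota /=.
by apply: c_range; rewrite -[[set u]]setUid s_clique.
Qed.

Lemma clique_size_leq : size s <= k.
Proof.
rewrite -(size_map c) -(size_iota 0 k).
exact: uniq_leq_size clique_colors_uniq clique_colors_sub.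
Qed.

Lemma clique_colors_onto : k <= size s -> forall g, g < k -> exists2 u, u \in s & c u = g.
Proof.
move=> ks g gk.
have ks' : size (iota 0 k) <= size (map c s) by rewrite size_iota size_map.
have [_ colors_eq] := uniq_min_size clique_colors_uniq clique_colors_sub ks'.
have : g \in map c s by rewrite colors_eq mem_iota.
by case/mapP => u us ->; exists u.
Qed.

End CliqueColoring.

Section Complex.
Variables (T : finType) (K : {set {set T}}).
Hypothesis K_complex : is_complex K.

Lemma complex_sub (A B : {set T}) : B \subset A -> A \in K -> B \in K.
Proof. by case: K_complex => _; apply. Qed.

Lemma complex_notin_sup (A B : {set T}) : A \subset B -> A \notin K -> B \notin K.
Proof. by move=> AB; apply: contra; apply: complex_sub. Qed.

Lemma complex0 : set0 \in K.
Proof. by case: K_complex => /set0Pn [A AK] _; apply: complex_sub (sub0set A) AK. Qed.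

Lemma complex_setTN : K != setT -> setT \notin K.
Proof.
apply: contra => TK; apply/eqP/setP => S; rewrite inE.
exact: complex_sub (subsetT S) TK.
Qed.

Hypothesis K_setTN : setT \notin K.

Lemma bier_edge_vertex u v : [set u; v] \in bier K -> [set u] \in bier K.
Proof.
case: u => i; case: v => j;
  rewrite ?bier_edge_ll ?bier_edge_rr ?bier_edge_lr ?bier_edge_rl;
  rewrite ?bier_vertex_l ?bier_vertex_r ?K_setTN ?complex0 ?andbT.
- by apply: complex_sub; rewrite sub1set setU11.
- by case/and3P.
- by case/and3P.
- by apply: complex_notin_sup; rewrite setCS sub1set setU11.
Qed.

Definition blocked (I : {set T}) x := [&& I \in K, x \notin I & x |: I \notin K].

Lemma exists_blocked (I : {set T}) :
  I \in K -> exists (F : {set T}) x, I \subset F /\ blocked F x.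
Proof.
move cardCI : #|~: I| => n; elim: n I cardCI => [|n IH] I cardCI IK.
  move/cards0_eq: cardCI => /(congr1 (@setC T)); rewrite setCK setC0 => IT.
  by move: K_setTN; rewrite -IT IK.
have [x xI] : exists x, x \notin I.
  apply/existsP; rewrite -negb_forall; apply: contra K_setTN => /forallP IT.
  by have -> : setT = I by apply/setP => y; rewrite inE IT.
case xIK : (x |: I \in K); last by exists I, x; rewrite /blocked IK xI xIK.
have [|F [y [xIF bF]]] := IH (x |: I) _ xIK.
  by have := cardsC (x |: I); have := cardsC I; rewrite cardsU1 xI; lia.
by exists F, y; split => //; apply: subset_trans xIF; apply: subsetUr.
Qed.

Definition bier_clique (I : {set T}) x : seq (T + T) :=
  map inl (enum I) ++ map inr (enum (~: (x |: I))).

Lemma bier_clique_uniq (I : {set T}) x : uniq (bier_clique I x).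
Proof.
rewrite cat_uniq !map_inj_uniq ?enum_uniq //=; try by move=> ? ? [].
by rewrite andbT; apply/hasPn => _ /mapP [j _ ->]; apply/mapP => -[].
Qed.

Lemma size_bier_clique (I : {set T}) x : x \notin I -> size (bier_clique I x) = #|T| - 1.
Proof.
move=> xI; rewrite size_cat !size_map -!cardE.
by have := cardsC (x |: I); rewrite cardsU1 xI; lia.
Qed.

Lemma mem_bier_clique (I : {set T}) x u : u \in bier_clique I x ->
  (exists2 i, i \in I & u = inl i) \/ (exists2 j, j \notin x |: I & u = inr j).
Proof.
rewrite mem_cat => /orP [] /mapP [y]; rewrite mem_enum => yI ->.
  by left; exists y.
by right; exists y; rewrite inE in yI.
Qed.

Lemma bier_clique_edge (I : {set T}) x : blocked I x ->
  {in bier_clique I x &, forall u v, [set u; v] \in bier K}.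
Proof.
case/and3P => IK xI xIK.
have coK (B : {set T}) : B \subset ~: (x |: I) -> ~: B \notin K.
  by move=> BxI; apply: complex_notin_sup xIK; rewrite -setCS setCK.
have ij_IxI i j : i \in I -> j \notin x |: I -> i != j.
  by move=> iI; apply: contraNneq => <-; rewrite setU1r.
move=> u v /mem_bier_clique [[i iI ->]|[j jn ->]] /mem_bier_clique [[i' iI' ->]|[j' jn' ->]].
- rewrite bier_edge_ll K_setTN andbT; apply: (complex_sub _ IK).
  by rewrite subUset !sub1set iI iI'.
- by rewrite bier_edge_lr (complex_sub _ IK) ?coK ?ij_IxI // sub1set ?in_setC.
- by rewrite bier_edge_rl (complex_sub _ IK) ?coK ?ij_IxI // sub1set ?in_setC.
- by rewrite bier_edge_rr complex0 andbT coK // subUset !sub1set !in_setC jn jn'.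
Qed.

Section Coloring.
Variables (k : nat) (c : T + T -> nat).
Hypothesis c_range : forall v, [set v] \in bier K -> c v < k.
Hypothesis c_proper : forall u v, u != v -> [set u; v] \in bier K -> c u != c v.

Lemma bier_colors_geq : #|T| - 1 <= k.
Proof.
have [F [x [_ bF]]] := exists_blocked complex0.
have /and3P [_ xF _] := bF.
rewrite -(size_bier_clique xF).
exact: (clique_size_leq c_range c_proper (bier_clique_uniq F x) (bier_clique_edge bF)).
Qed.

Lemma blocked_colors_onto (I : {set T}) x g : k <= #|T| - 1 -> blocked I x -> g < k ->
  (exists2 i, i \in I & c (inl i) = g) \/ (exists2 j, j \notin x |: I & c (inr j) = g).
Proof.
move=> k_le bI gk; have /and3P [_ xI _] := bI.
have k_size : k <= size (bier_clique I x) by rewrite size_bier_clique.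
have [u /mem_bier_clique [[i iI ->]|[j jn ->]] cu] :=
  clique_colors_onto c_range c_proper (bier_clique_uniq I x) (bier_clique_edge bI)
    k_size gk.
  by left; exists i.
by right; exists j.
Qed.

End Coloring.
End Complex.

Section TwinColors.
Variables (T : finType) (K : {set {set T}}).
Hypotheses (K_complex : is_complex K) (K_setTN : setT \notin K).
Variable c : T + T -> nat.
Hypothesis c_range : forall v, [set v] \in bier K -> c v < #|T| - 1.
Hypothesis c_proper : forall u v, u != v -> [set u; v] \in bier K -> c u != c v.

Lemma left_color_range i : [set i] \in K -> c (inl i) < #|T| - 1.
Proof. by move=> iK; apply: c_range; rewrite bier_vertex_l iK. Qed.

Lemma notin_complex_setC1 (I : {set T}) x j :
  x |: I \notin K -> j \notin x |: I -> ~: [set j] \notin K.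
Proof.
move=> xIK jn; apply: (complex_notin_sup K_complex _ xIK).
by rewrite subsetC sub1set in_setC.
Qed.

(* If [v] were not a cone point, some face [I] would be blocked by [v]; the color
   of [inl v] and [inr v] must then occur on the clique of [I] and [v], whose
   vertices are all adjacent to [inl v] or to [inr v]. *)
Lemma twin_colors_cone_vertex v :
  [set v] \in K -> ~: [set v] \notin K -> c (inl v) = c (inr v) ->
  forall I, I \in K -> v |: I \in K.
Proof.
move=> vK vR cv I IK; have [vI|vI] := boolP (v \in I).
  by rewrite (setUidPr _) ?sub1set.
apply/negPn/negP => vIK; have bI : blocked K I v by rewrite /blocked IK vI vIK.
have [[i iI ci]|[j jn cj]] :=
  blocked_colors_onto K_complex K_setTN c_range c_proper (leqnn _) bI (left_color_range vK).
- have iv : i != v by apply: contraNneq vI => <-.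
  suff : c (inl i) != c (inr v) by rewrite ci cv eqxx.
  by apply: c_proper; rewrite // bier_edge_lr vR iv (complex_sub K_complex _ IK) ?sub1set.
- have vj : v != j by apply: contraNneq jn => <-; rewrite setU11.
  suff : c (inl v) != c (inr j) by rewrite cj eqxx.
  by apply: c_proper; rewrite // bier_edge_lr vK vj (notin_complex_setC1 vIK jn).
Qed.

Section DistinctTwins.
Hypothesis T_ge3 : 3 <= #|T|.
Hypothesis twins_differ :
  forall v, [set v] \in K -> ~: [set v] \notin K -> c (inl v) != c (inr v).

Lemma left_right_colors_differ i j :
  [set i] \in K -> ~: [set j] \notin K -> c (inl i) != c (inr j).
Proof.
move=> iK; case: (eqVneq i j) => [<- iR|ij jR]; first exact: twins_differ.
by apply: c_proper; rewrite // bier_edge_lr iK jR ij.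
Qed.

Let left_colors :=
  [seq g <- iota 0 (#|T| - 1) | [exists i, ([set i] \in K) && (c (inl i) == g)]].

(* The clique of a blocked pair [I, x] uses every color, and no left-vertex color
   can sit on one of its right vertices: so [I] carries exactly the left colors. *)
Lemma card_blocked (I : {set T}) x : blocked K I x -> #|I| = size left_colors.
Proof.
move=> bI; have /and3P [IK _ xIK] := bI.
have iK i : i \in I -> [set i] \in K.
  by move=> iI; rewrite (complex_sub K_complex _ IK) ?sub1set.
have colors_uniq : uniq [seq c (inl i) | i <- enum I].
  rewrite map_inj_in_uniq ?enum_uniq // => i i'; rewrite !mem_enum => iI i'I ci.
  case: (eqVneq i i') => // ii'; suff : c (inl i) != c (inl i') by rewrite ci eqxx.
  apply: c_proper; rewrite ?(inj_eq (@inl_inj _ _)) // bier_edge_ll K_setTN andbT.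
  by rewrite (complex_sub K_complex _ IK) // subUset !sub1set iI i'I.
have colors_eq : [seq c (inl i) | i <- enum I] =i left_colors.
  move=> g; rewrite mem_filter mem_iota /=; apply/mapP/andP.
    case=> i; rewrite mem_enum => iI ->; split; last exact: left_color_range (iK i iI).
    by apply/existsP; exists i; rewrite iK ?eqxx.
  case=> /existsP [i0 /andP [i0K /eqP <-]] i0_range.
  have [[i iI ci]|[j jn cj]] :=
    blocked_colors_onto K_complex K_setTN c_range c_proper (leqnn _) bI i0_range.
    by exists i; rewrite ?mem_enum.
  by have := left_right_colors_differ i0K (notin_complex_setC1 xIK jn); rewrite cj eqxx.
rewrite cardE -(size_map (fun i => c (inl i))); apply: perm_size.
by apply: uniq_perm; rewrite ?filter_uniq ?iota_uniq.
Qed.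

Lemma card_face_leq (I : {set T}) : I \in K -> #|I| <= size left_colors.
Proof.
move=> IK; have [F [x [IF bF]]] := exists_blocked K_setTN IK.
by rewrite -(card_blocked bF) subset_leq_card.
Qed.

Lemma face_extend (I : {set T}) x : I \in K -> #|I| < size left_colors -> x |: I \in K.
Proof.
move=> IK; have [xI _|xI] := boolP (x \in I); first by rewrite (setUidPr _) ?sub1set.
apply: contraTT => xIK; rewrite -leqNgt (card_blocked (x := x)) //.
by rewrite /blocked IK xI xIK.
Qed.

Lemma singleton_in_complex i : 1 <= size left_colors -> [set i] \in K.
Proof.
move=> a1; rewrite -(setU0 [set i]).
by apply: face_extend (complex0 K_complex) _; rewrite cards0.
Qed.

Lemma left_colors_lt2 : size left_colors < 2.
Proof.
rewrite ltnNge; apply/negP => a2.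
have s_uniq : uniq (map (@inl T T) (enum T)).
  by rewrite map_inj_uniq ?enum_uniq //; move=> ? ? [].
have s_clique : {in map (@inl T T) (enum T) &, forall u v, [set u; v] \in bier K}.
  move=> _ _ /mapP [i _ ->] /mapP [j _ ->]; rewrite bier_edge_ll K_setTN andbT.
  by apply: face_extend; rewrite ?cards1 ?singleton_in_complex //; apply: ltnW.
have := clique_size_leq c_range c_proper s_uniq s_clique.
by rewrite size_map -cardT; lia.
Qed.

Lemma left_colors_gt : #|T| - 3 < size left_colors.
Proof.
rewrite ltnNge; apply/negP => a3.
have nonface (S : {set T}) : #|T| - 2 <= #|S| -> S \notin K.
  by move=> S2; apply/negP => /card_face_leq; lia.
have s_uniq : uniq (map (@inr T T) (enum T)).
  by rewrite map_inj_uniq ?enum_uniq //; move=> ? ? [].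
have s_clique : {in map (@inr T T) (enum T) &, forall u v, [set u; v] \in bier K}.
  move=> _ _ /mapP [i _ ->] /mapP [j _ ->]; rewrite bier_edge_rr complex0 // andbT.
  by apply: nonface; have := cardsC [set i; j]; rewrite cards2; case: (_ != _) => /=; lia.
have := clique_size_leq c_range c_proper s_uniq s_clique.
by rewrite size_map -cardT; lia.
Qed.

Lemma points_complex : #|T| = 3 /\ forall S : {set T}, (S \in K) = (#|S| <= 1).
Proof.
have := left_colors_lt2; have := left_colors_gt => a_gt a_lt.
have a1 : size left_colors = 1 by lia.
split=> [|S]; first by lia.
apply/idP/idP => [/card_face_leq|]; first by rewrite a1.
rewrite leq_eqVlt ltnS leqn0 => /orP [/cards1P [x ->]|/eqP/cards0_eq ->].
  by rewrite singleton_in_complex ?a1.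
exact: complex0 K_complex.
Qed.

End DistinctTwins.

Lemma cone_vertex_or_points : 3 <= #|T| ->
  (exists v, forall I, I \in K -> v |: I \in K) \/
  (#|T| = 3 /\ forall S : {set T}, (S \in K) = (#|S| <= 1)).
Proof.
move=> T_ge3; case: (pickP (fun v =>
  [&& [set v] \in K, ~: [set v] \notin K & c (inl v) == c (inr v)])).
  move=> v /and3P [vK vR /eqP cv]; left; exists v.
  exact: twin_colors_cone_vertex.
move=> no_twin; right; apply: points_complex => // v vK vR.
by have := no_twin v; rewrite /= vK vR => /negbT.
Qed.

End TwinColors.

Section PermImage.
Local Open Scope group_scope.
Variable T : finType.
Implicit Types (s : {perm T}) (A : {set T}).

Lemma perm_imset_pre s A : s @: A = s^-1 @^-1: A.
Proof. exact/can_imset_pre/permK. Qed.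

Lemma mem_perm_imset s A x : (x \in s @: A) = (s^-1 x \in A).
Proof. by rewrite perm_imset_pre inE. Qed.

Lemma perm_imsetK s : cancel (fun A => s @: A) (fun A => s^-1 @: A).
Proof. by move=> A; apply/setP => x; rewrite !mem_perm_imset invgK permK. Qed.

Lemma perm_imsetC s A : s @: (~: A) = ~: (s @: A).
Proof. by rewrite !perm_imset_pre preimsetC. Qed.

Lemma perm_imsetT s : s @: [set: T] = [set: T].
Proof. by rewrite perm_imset_pre preimsetT. Qed.

End PermImage.

Section Relabel.
Local Open Scope group_scope.
Variable n : nat.
Implicit Types (s t : {perm 'I_n}) (K : {set {set 'I_n}}).

Lemma relabelE s K S : (S \in relabel s K) = (s^-1 @: S \in K).
Proof. by rewrite /relabel (can_imset_pre _ (perm_imsetK s)) inE. Qed.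

Lemma relabelM s t K : relabel s (relabel t K) = relabel (t * s) K.
Proof.
apply/setP => S; rewrite !relabelE invMg -imset_comp; congr (_ \in K).
by apply: eq_imset => x /=; rewrite permM.
Qed.

Lemma relabel1 K : relabel 1 K = K.
Proof.
apply/setP => S; rewrite relabelE invg1; congr (_ \in K).
by apply/setP => x; rewrite mem_perm_imset invg1 perm1.
Qed.

Lemma relabel_complex s K : is_complex K -> is_complex (relabel s K).
Proof.
case=> /set0Pn [A AK] K_sub; split.
  by apply/set0Pn; exists (s @: A); rewrite relabelE perm_imsetK.
by move=> A' B'; rewrite !relabelE => BA; apply: K_sub; apply: imsetS.
Qed.

Lemma relabel_setT s K : (setT \in relabel s K) = (setT \in K).
Proof. by rewrite relabelE perm_imsetT. Qed.

Lemma bier_relabel_edge s K u v :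
  ([set u; v] \in bier (relabel s K)) = ([set sum_map s^-1 u; sum_map s^-1 v] \in bier K).
Proof.
by case: u => i; case: v => j /=;
  rewrite ?bier_edge_ll ?bier_edge_rr ?bier_edge_lr ?bier_edge_rl !relabelE
    ?perm_imsetC ?imsetU1 ?imset_set1 ?perm_imsetT ?imset0 ?(inj_eq perm_inj).
Qed.

Lemma relabel_colorable s K k : colorable (bier K) k -> colorable (bier (relabel s K)) k.
Proof.
apply: (colorable_pullback (phi := sum_map s^-1)); first exact/sum_map_inj/perm_inj.
by move=> u v; rewrite bier_relabel_edge.
Qed.

End Relabel.

Section AlexanderDual.
Variable T : finType.
Implicit Types (K : {set {set T}}).

Definition sum_swap (u : T + T) : T + T := match u with inl i => inr i | inr i => inl i end.

Lemma sum_swap_inj : injective sum_swap.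
Proof. by move=> [i|i] [j|j] //= [->]. Qed.

Lemma bier_alex_dual_edge K u v :
  ([set u; v] \in bier (alex_dual K)) = ([set sum_swap u; sum_swap v] \in bier K).
Proof.
case: u => i; case: v => j /=;
  rewrite ?bier_edge_ll ?bier_edge_rr ?bier_edge_lr ?bier_edge_rl !inE
    ?setCK ?setC0 ?setCT ?negbK //.
- by rewrite eq_sym; case: (_ \in K); case: (_ \in K).
- by rewrite eq_sym; case: (_ \in K); case: (_ \in K).
Qed.

Lemma alex_dual_colorable K k : colorable (bier K) k -> colorable (bier (alex_dual K)) k.
Proof.
apply: (colorable_pullback (phi := sum_swap)); first exact: sum_swap_inj.
by move=> u v; rewrite bier_alex_dual_edge.
Qed.

End AlexanderDual.

Section Cone.
Variable n : nat.
Local Notation wd := (widen_ord (leqnSn n)).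
Implicit Types (R : {set {set 'I_n}}) (X : {set 'I_n}) (S : {set 'I_n.+1}).

Lemma widen_inj : injective wd.
Proof. by move=> i j /(congr1 val) /= /val_inj. Qed.

Lemma widen_neq_max i : (wd i == ord_max) = false.
Proof. by apply/negbTE; rewrite -val_eqE /= neq_ltn ltn_ord. Qed.

Lemma lift_max_widen i : lift ord_max i = wd i.
Proof. by apply: val_inj; rewrite /= /bump leqNgt ltn_ord. Qed.

Lemma max_or_widen (x : 'I_n.+1) : x = ord_max \/ exists i, x = wd i.
Proof.
by case: (unliftP ord_max x) => [i ->|->]; [right; exists i; rewrite lift_max_widen|left].
Qed.

Lemma mem_widen_set X i : (wd i \in widen_set X) = (i \in X).
Proof. exact/mem_imset/widen_inj. Qed.

Lemma max_notin_widen_set X : (ord_max \in widen_set X) = false.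
Proof. by apply/negbTE/imsetP => -[i _ /eqP]; rewrite eq_sym widen_neq_max. Qed.

Lemma widen_setK X : wd @^-1: widen_set X = X.
Proof. by apply/setP => i; rewrite inE mem_widen_set. Qed.

Lemma preimset_widen1 i : wd @^-1: [set wd i] = [set i].
Proof. by rewrite -imset_set1 widen_setK. Qed.

Lemma preimset_max : wd @^-1: [set ord_max] = set0.
Proof. by apply/setP => i; rewrite !inE widen_neq_max. Qed.

Lemma widen_set_preimset S :
  S = if ord_max \in S then ord_max |: widen_set (wd @^-1: S) else widen_set (wd @^-1: S).
Proof.
apply/setP => x; case: (max_or_widen x) => [->|[i ->]].
  by case: ifP; rewrite ?setU11 ?max_notin_widen_set.
by case: ifP; rewrite ?in_setU1 ?widen_neq_max mem_widen_set inE.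
Qed.

Lemma widen_set_preimset_sub S : widen_set (wd @^-1: S) \subset S.
Proof. by apply/subsetP => _ /imsetP [i iS ->]; rewrite inE in iS. Qed.

Lemma sub_max_widen_set_preimset S : S \subset ord_max |: widen_set (wd @^-1: S).
Proof.
apply/subsetP => x xS; case: (max_or_widen x) => [->|[i ei]]; first exact: setU11.
by rewrite ei setU1r // mem_widen_set inE -ei.
Qed.

Lemma cone_mem R S : (S \in cone R) = (wd @^-1: S \in R).
Proof.
apply/idP/idP.
  by rewrite inE => /orP [] /imsetP [X XR ->];
    rewrite ?preimsetU ?preimset_max ?set0U widen_setK.
move=> SR; rewrite (widen_set_preimset S) inE; case: ifP => _; apply/orP; [right|left];
  exact: imset_f.
Qed.

Lemma cone_setT R : (setT \in cone R) = (setT \in R).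
Proof. by rewrite cone_mem preimsetT. Qed.

Lemma sum_map_widen_or_max (u : 'I_n.+1 + 'I_n.+1) :
  (exists w, u = sum_map wd w) \/ u = inl ord_max \/ u = inr ord_max.
Proof.
case: u => x; case: (max_or_widen x) => [->|[i ->]]; auto.
  by left; exists (inl i).
by left; exists (inr i).
Qed.

Ltac bier_cone_simpl := rewrite
  ?bier_edge_ll ?bier_edge_rr ?bier_edge_lr ?bier_edge_rl ?bier_vertex_l ?bier_vertex_r
  !cone_mem ?preimsetC ?preimsetU ?preimset_widen1 ?preimset_max ?preimsetT ?preimset0
  ?set0U ?setU0 ?(inj_eq widen_inj) ?widen_neq_max ?eqxx //=.

Lemma bier_cone_widen R u v :
  ([set sum_map wd u; sum_map wd v] \in bier (cone R)) = ([set u; v] \in bier R).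
Proof. by case: u => i; case: v => j /=; bier_cone_simpl. Qed.

Lemma bier_cone_apex_l R v :
  ([set inl ord_max; sum_map wd v] \in bier (cone R)) = ([set v] \in bier R).
Proof. by case: v => j /=; bier_cone_simpl; rewrite eq_sym widen_neq_max andbT andbC. Qed.

Lemma bier_cone_apex_r R v :
  [set inr ord_max; sum_map wd v] \in bier (cone R) -> [set v] \in bier R.
Proof. by case: v => j /=; bier_cone_simpl; rewrite setC0 andbT. Qed.

Lemma bier_cone_apex R :
  ([set inl ord_max] \in bier (cone R)) = (set0 \in R) && (setT \notin R).
Proof. by bier_cone_simpl. Qed.

End Cone.

Section ConeColoring.
Variable n : nat.
Local Notation wd := (widen_ord (leqnSn n)).
Implicit Types (R : {set {set 'I_n}}).

Definition sum_unwiden (u : 'I_n.+1 + 'I_n.+1) : option ('I_n + 'I_n) :=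
  match u with
  | inl x => omap inl (unlift ord_max x)
  | inr x => omap inr (unlift ord_max x)
  end.

Lemma sum_map_widenK w : sum_unwiden (sum_map wd w) = Some w.
Proof. by case: w => i /=; rewrite -lift_max_widen liftK. Qed.

(* The two copies of the apex are not adjacent, so they can share one new color. *)
Lemma cone_colorable R k : colorable (bier R) k -> colorable (bier (cone R)) k.+1.
Proof.
case=> c [c_range c_proper].
exists (fun u => if sum_unwiden u is Some w then c w else k); split.
  move=> v; case: (sum_map_widen_or_max v) => [[w ->]|[->|->]];
    rewrite ?sum_map_widenK /= ?unlift_none //.
  by rewrite -[[set _]]setUid bier_cone_widen setUid => /c_range; apply: ltnW.
have new_color w : [set w] \in bier R -> c w != k.
  by move=> /c_range; rewrite neq_ltn => ->.
move=> u v; case: (sum_map_widen_or_max u) => [[w ->]|[->|->]];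
  case: (sum_map_widen_or_max v) => [[w' ->]|[->|->]];
  rewrite ?sum_map_widenK /= ?unlift_none ?eqxx //.
- by rewrite (inj_eq (sum_map_inj (@widen_inj n))) bier_cone_widen; apply: c_proper.
- by move=> _; rewrite setUC bier_cone_apex_l; apply: new_color.
- by move=> _; rewrite setUC => /bier_cone_apex_r; apply: new_color.
- by move=> _; rewrite bier_cone_apex_l eq_sym; apply: new_color.
- by move=> _; rewrite bier_edge_twins.
- by move=> _ /bier_cone_apex_r; rewrite eq_sym; apply: new_color.
- by move=> _; rewrite setUC bier_edge_twins.
Qed.

(* The apex [inl ord_max] is adjacent to every vertex [sum_map wd w]; removing its
   color and closing the gap gives a coloring of [bier R] with one color less. *)
Lemma cone_colorable_inv R k :
  is_complex R -> setT \notin R ->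
  colorable (bier (cone R)) k.+1 -> colorable (bier R) k.
Proof.
move=> R_complex R_setTN [c [c_range c_proper]].
pose c0 := c (inl ord_max); pose cw w := c (sum_map wd w).
have c0_range : c0 < k.+1 by apply: c_range; rewrite bier_cone_apex complex0.
have apex_color w : [set w] \in bier R -> cw w != c0.
  move=> wR; apply: c_proper; last by rewrite setUC bier_cone_apex_l.
  by case: w {wR} => i //=; apply/eqP => -[] /eqP; rewrite ltn_eqF.
have cw_range w : [set w] \in bier R -> cw w < k.+1.
  by move=> wR; apply: c_range; rewrite -[[set _]]setUid bier_cone_widen setUid.
exists (fun w => if cw w < c0 then cw w else (cw w).-1).
split=> [w wR|u v uv uvR].
  by have := apex_color w wR; have := cw_range w wR; case: ifP; lia.
have uR := bier_edge_vertex R_complex R_setTN uvR.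
have vR : [set v] \in bier R.
  by apply: (bier_edge_vertex R_complex R_setTN (v := u)); rewrite setUC.
have := apex_color _ uR; have := apex_color _ vR.
have : cw u != cw v.
  by apply: c_proper; rewrite ?(inj_eq (sum_map_inj (@widen_inj n))) ?bier_cone_widen.
by do 2 case: ifP; lia.
Qed.

End ConeColoring.

Section ConeBase.
Variable n : nat.

Definition cone_base (K : {set {set 'I_n.+1}}) : {set {set 'I_n}} :=
  [set S | widen_set S \in K].

Lemma cone_baseK (K : {set {set 'I_n.+1}}) :
  is_complex K -> (forall I, I \in K -> ord_max |: I \in K) -> cone (cone_base K) = K.
Proof.
move=> K_complex apex; apply/setP => S; rewrite cone_mem inE.
apply/idP/idP => [wK|SK].
  exact: (complex_sub K_complex (sub_max_widen_set_preimset S) (apex _ wK)).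
exact: (complex_sub K_complex (widen_set_preimset_sub S) SK).
Qed.

Lemma cone_base_complex (K : {set {set 'I_n.+1}}) : is_complex K -> is_complex (cone_base K).
Proof.
move=> K_complex; split.
  by apply/set0Pn; exists set0; rewrite inE /widen_set imset0 complex0.
by move=> A B BA; rewrite !inE; apply: (complex_sub K_complex); apply: imsetS.
Qed.

End ConeBase.

Lemma cone_relabel n (s : {perm 'I_n}) (R : {set {set 'I_n}}) :
  cone (relabel s R) = relabel (lift_perm ord_max ord_max s) (cone R).
Proof.
apply/setP => S; rewrite relabelE !cone_mem relabelE; congr (_ \in R).
apply/setP => i; rewrite !inE !mem_perm_imset !invgK inE.
by rewrite -[widen_ord _ i]lift_max_widen lift_perm_lift lift_max_widen.
Qed.

Definition gen_up_to_relabel n (K : {set {set 'I_n}}) : Prop :=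
  exists (K0 : {set {set 'I_n}}) (s : {perm 'I_n}), gen_from_base K0 /\ K = relabel s K0.

Section RelabelGen.
Local Open Scope group_scope.
Variable n : nat.
Implicit Types (K : {set {set 'I_n}}) (v w : 'I_n).

Lemma relabel_tpermK v w K : relabel (tperm v w) (relabel (tperm v w) K) = K.
Proof. by rewrite relabelM tperm2 relabel1. Qed.

Lemma relabel_tperm_apex v w K :
  (forall I, I \in K -> v |: I \in K) ->
  forall I, I \in relabel (tperm v w) K -> w |: I \in relabel (tperm v w) K.
Proof. by move=> apex I; rewrite !relabelE imsetU1 tpermV tpermR; apply: apex. Qed.

Lemma relabel_gen_up_to (s : {perm 'I_n}) K :
  gen_up_to_relabel (relabel s K) -> gen_up_to_relabel K.
Proof.
case=> K0 [t [gK0 EK]]; exists K0, (t * s^-1); split => //.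
by rewrite -relabelM -EK relabelM mulgV relabel1.
Qed.

Lemma gen_up_to_relabel_cone (s : {perm 'I_n.+1}) (R : {set {set 'I_n}}) :
  gen_up_to_relabel R -> gen_up_to_relabel (relabel s (cone R)).
Proof.
case=> R0 [t [gR0 ->]]; exists (cone R0), (lift_perm ord_max ord_max t * s).
by split; [apply: gen_cone | rewrite cone_relabel relabelM].
Qed.

End RelabelGen.

Lemma apex_reduction n (K : {set {set 'I_n.+1}}) v :
  is_complex K -> setT \notin K -> (forall I, I \in K -> v |: I \in K) ->
  exists R : {set {set 'I_n}},
    [/\ is_complex R, setT \notin R & K = relabel (tperm v ord_max) (cone R)].
Proof.
move=> K_complex K_setTN apex.
pose K' := relabel (tperm v ord_max) K.
have K'_complex : is_complex K' by apply: relabel_complex.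
have K'_cone : cone (cone_base K') = K'.
  exact/cone_baseK/relabel_tperm_apex.
exists (cone_base K'); split; first exact: cone_base_complex.
  by rewrite -cone_setT K'_cone relabel_setT.
by rewrite K'_cone relabel_tpermK.
Qed.

Section ThreeVertices.
Implicit Types (S : {set 'I_3}) (K : {set {set 'I_3}}).

Lemma ord3_ind (P : 'I_3 -> Prop) : P v1 -> P v2 -> P v3 -> forall x, P x.
Proof.
move=> P1 P2 P3 [[|[|[|i]]] ix] //;
  [have -> : Ordinal ix = v1|have -> : Ordinal ix = v2|have -> : Ordinal ix = v3] => //;
  exact: val_inj.
Qed.

Lemma eq_set3 S1 S2 :
  (S1 == S2) = [&& (v1 \in S1) == (v1 \in S2), (v2 \in S1) == (v2 \in S2)
                 & (v3 \in S1) == (v3 \in S2)].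
Proof.
apply/eqP/and3P => [->|[/eqP e1 /eqP e2 /eqP e3]]; first by rewrite !eqxx.
by apply/setP; elim/ord3_ind.
Qed.

Lemma card_set3 S : #|S| = (v1 \in S) + (v2 \in S) + (v3 \in S).
Proof.
rewrite -sum1_card big_mkcond /= !big_ord_recl big_ord0.
have -> : (lift ord0 (lift ord0 ord0) : 'I_3) = v3 by apply: val_inj.
have -> : (lift ord0 ord0 : 'I_3) = v2 by apply: val_inj.
have -> : (ord0 : 'I_3) = v1 by apply: val_inj.
by case: (v1 \in S); case: (v2 \in S); case: (v3 \in S).
Qed.

Lemma mem_G4 S : (S \in G4) = (v3 \notin S).
Proof. by rewrite !inE !eq_set3 !inE; case: (v1 \in S); case: (v2 \in S); case: (v3 \in S). Qed.

Lemma mem_Gamma4 S : (S \in Gamma4) = ((v2 \in S) + (v3 \in S) <= 1).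
Proof. by rewrite !inE !eq_set3 !inE; case: (v1 \in S); case: (v2 \in S); case: (v3 \in S). Qed.

Lemma mem_Gamma6 S : (S \in Gamma6) = ((v1 \in S) + (v2 \in S) + (v3 \in S) <= 1).
Proof. by rewrite !inE !eq_set3 !inE; case: (v1 \in S); case: (v2 \in S); case: (v3 \in S). Qed.

Ltac bier3_brute_force memE :=
  case; elim/ord3_ind; case; elim/ord3_ind;
  rewrite ?bier_edge_ll ?bier_edge_rr ?bier_edge_lr ?bier_edge_rl !memE !inE.

Lemma G4_colorable : colorable (bier G4) 2.
Proof.
exists (fun u => match u with inl i | inr i => nat_of_bool (i == v2) end).
by split; [case=> i _; case: (i == v2) | bier3_brute_force mem_G4].
Qed.

Lemma Gamma4_colorable : colorable (bier Gamma4) 2.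
Proof.
exists (fun u => match u with inl i | inr i => nat_of_bool (i != v1) end).
by split; [case=> i _; case: (i != v1) | bier3_brute_force mem_Gamma4].
Qed.

Lemma Gamma6_colorable : colorable (bier Gamma6) 2.
Proof.
exists (fun u => match u with inl _ => 0 | inr _ => 1 end).
by split; [case | bier3_brute_force mem_Gamma6].
Qed.

(* Such a cone is determined by which of [v2], [v3] are vertices: the edge
   [{v2, v3}] is missing, as its cone would be [setT]. *)
Lemma cone3_gen K :
  is_complex K -> setT \notin K -> (forall I, I \in K -> v1 |: I \in K) ->
  gen_up_to_relabel K.
Proof.
move=> K_complex K_setTN apex.
have memK S : (S \in K) = [&& ~~ ((v2 \in S) && (v3 \in S)),
    (v2 \in S) ==> ([set v2] \in K) & (v3 \in S) ==> ([set v3] \in K)].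
  have -> : (S \in K) = (S :\ v1 \in K).
    apply/idP/idP => SK; first by apply: (complex_sub K_complex _ SK); apply: subsetDl.
    apply: (complex_sub K_complex _ (apex _ SK)); apply/subsetP => x xS.
    by rewrite !inE xS andbT; case: (x == v1).
  case b2 : (v2 \in S); case b3 : (v3 \in S) => /=.
  - have -> : S :\ v1 = [set v2; v3] by apply/eqP; rewrite eq_set3 !inE b2 b3.
    apply/negP => /apex; have -> : v1 |: [set v2; v3] = setT by apply/eqP; rewrite eq_set3 !inE.
    exact/negP.
  - have -> : S :\ v1 = [set v2] by apply/eqP; rewrite eq_set3 !inE b2 b3.
    by rewrite andbT.
  - by have -> : S :\ v1 = [set v3] by apply/eqP; rewrite eq_set3 !inE b2 b3.
  - have -> : S :\ v1 = set0 by apply/eqP; rewrite eq_set3 !inE b2 b3.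
    exact: complex0 K_complex.
case k2 : ([set v2] \in K); case k3 : ([set v3] \in K).
- exists Gamma4, 1%g; split; first exact: gen_Gamma4.
  apply/setP => S; rewrite relabel1 memK mem_Gamma4 k2 k3.
  by case: (v2 \in S); case: (v3 \in S).
- exists G4, 1%g; split; first exact: gen_G4.
  apply/setP => S; rewrite relabel1 memK mem_G4 k2 k3.
  by case: (v2 \in S); case: (v3 \in S).
- exists G4, (tperm v2 v3); split; first exact: gen_G4.
  apply/setP => S; rewrite relabelE mem_G4 mem_perm_imset invgK tpermR memK k2 k3.
  by case: (v2 \in S); case: (v3 \in S).
- exists (alex_dual Gamma4), 1%g; split.
    apply: gen_dual; first exact: gen_Gamma4.
    by apply/eqP => /setP /(_ setT); rewrite mem_Gamma4 !inE.
  apply/setP => S; rewrite relabel1 memK inE mem_Gamma4 !inE k2 k3.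
  by case: (v2 \in S); case: (v3 \in S).
Qed.

Lemma apex3_gen K v :
  is_complex K -> setT \notin K -> (forall I, I \in K -> v |: I \in K) ->
  gen_up_to_relabel K.
Proof.
move=> K_complex K_setTN apex; apply: (relabel_gen_up_to (s := tperm v v1)).
apply: cone3_gen; rewrite ?relabel_setT //; first exact: relabel_complex.
exact: relabel_tperm_apex.
Qed.

Lemma points3_gen K : (forall S, (S \in K) = (#|S| <= 1)) -> gen_up_to_relabel K.
Proof.
move=> memK; exists Gamma6, 1%g; split; first exact: gen_Gamma6.
by apply/setP => S; rewrite relabel1 memK mem_Gamma6 card_set3.
Qed.

End ThreeVertices.

Lemma gen_colorable n (R : {set {set 'I_n}}) :
  gen_from_base R -> 3 <= n /\ colorable (bier R) (n - 1).
Proof.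
elim=> {n R} [||| n R _ [n_ge3 col] | n R _ [n_ge3 col] _].
- exact: (conj _ G4_colorable).
- exact: (conj _ Gamma4_colorable).
- exact: (conj _ Gamma6_colorable).
- split; first by lia.
  by have := cone_colorable col; have -> : (n - 1).+1 = n.+1 - 1 by lia.
- by split; last exact: alex_dual_colorable.
Qed.

Lemma colorable_gen m (K : {set {set 'I_m}}) :
  3 <= m -> is_complex K -> setT \notin K -> colorable (bier K) (m - 1) ->
  gen_up_to_relabel K.
Proof.
elim: m K => [//|n IH] K m_ge3 K_complex K_setTN col.
have [c [c_range c_proper]] := col.
have c_range_card u : [set u] \in bier K -> c u < #|'I_n.+1| - 1.
  by move/c_range; rewrite card_ord.
have [|[v apex]|[card3 points]] := cone_vertex_or_points K_complex K_setTN c_range_card c_proper.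
- by rewrite card_ord.
- have [n2|n_ge3] : n = 2 \/ 3 <= n by lia.
    by subst n; apply: apex3_gen apex.
  have [R [R_complex R_setTN EK]] := apex_reduction K_complex K_setTN apex.
  rewrite EK; apply/gen_up_to_relabel_cone/IH => //.
  apply: cone_colorable_inv => //; have -> : (n - 1).+1 = n.+1 - 1 by lia.
  by rewrite -(relabel_tpermK v ord_max (cone R)) -EK; apply: relabel_colorable.
- by move: card3; rewrite card_ord => -[n2]; subst n; apply: points3_gen.
Qed.

Theorem mainTheorem10 (m : nat) (K : {set {set 'I_m}}) :
  3 <= m -> is_complex K -> K != setT ->
  (chromatic_number_is (bier K) (m - 1) <->
   exists (K0 : {set {set 'I_m}}) (s : {perm 'I_m}),
     gen_from_base K0 /\ K = relabel s K0).
Proof.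
move=> m_ge3 K_complex K_neqT; have K_setTN := complex_setTN K_complex K_neqT.
split=> [[col _]|[K0 [s [gK0 EK]]]]; first exact: colorable_gen.
split; first by have [_ col0] := gen_colorable gK0; rewrite EK; apply: relabel_colorable.
move=> j [c [c_range c_proper]]; rewrite -[m in m - 1]card_ord.
exact: (bier_colors_geq K_complex K_setTN c_range c_proper).
Qed.
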